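(* For complex parameters $a,c$, \begin{align*} \sum_{n=0}^\infty \sum_{j=-n}^n (-1)^j \bigl(1-q^{4n+2}\bigr)q^{j^2-2n}\frac{\bigl(q^2/a, q^2/c; q^2\bigr)_n (ac)^n}{\bigl(q^2a, q^2c; q^2\bigr)_n} =\frac{\bigl(q^2, ac; q^2\bigr)_\infty}{\bigl(q^2a, q^2c; q^2\bigr)_\infty}\sum_{n=0}^\infty \frac{\bigl(q^2/a, q^2/c, q; q^2\bigr)_n}{(-q; q)_{2n} \bigl(q^2; q^2\bigr)_n}\biggl(\frac{ac}{q^2}\biggr)^n. \end{align*}
   Context: Throughout, $q$ is a complex number with $0<|q|<1$. For $x\in\mathbb{C}$ and base $p\in\{q,q^2\}$, $(x;p)_\infty=\prod_{k=0}^\infty(1-xp^k)$ and, for an integer $n\ge 0$, $(x;p)_n=\prod_{k=0}^{n-1}(1-xp^k)$; also $(x_1,\dots,x_m;p)_n=(x_1;p)_n\cdots(x_m;p)_n$ for $n$ an integer or $\infty$. *)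

From Stdlib Require Import Reals ZArith.
From Coquelicot Require Import Coquelicot.
Open Scope C_scope.

Fixpoint qpoch (x p : C) (n : nat) : C :=
  match n with
  | O => 1
  | S m => qpoch x p m * (1 - x * p ^ m)
  end.

(* infinite q-Pochhammer (x;p)_oo = lim_n (x;p)_n, taken componentwise
   (the limit exists whenever |p| < 1). *)
Definition qpoch_inf (x p : C) : C :=
  (real (Lim_seq (fun n => fst (qpoch x p n))),
   real (Lim_seq (fun n => snd (qpoch x p n)))).

(* summand of the left-hand side, index j = i - n with i = 0..2n *)
Definition lhs_inner (q a c : C) (n i : nat) : C :=
  let j := (Z.of_nat i - Z.of_nat n)%Z in
  (-1) ^ (Z.abs_nat j) * (1 - q ^ (4 * n + 2)) * (q ^ (Z.abs_nat j * Z.abs_nat j) / q ^ (2 * n))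
  * (qpoch (q ^ 2 / a) (q ^ 2) n * qpoch (q ^ 2 / c) (q ^ 2) n * (a * c) ^ n)
  / (qpoch (q ^ 2 * a) (q ^ 2) n * qpoch (q ^ 2 * c) (q ^ 2) n).

Definition lhs_term (q a c : C) (n : nat) : C :=
  sum_n (lhs_inner q a c n) (2 * n).

Definition rhs_term (q a c : C) (n : nat) : C :=
  qpoch (q ^ 2 / a) (q ^ 2) n * qpoch (q ^ 2 / c) (q ^ 2) n * qpoch q (q ^ 2) n
  / (qpoch (- q) q (2 * n) * qpoch (q ^ 2) (q ^ 2) n)
  * (a * c / q ^ 2) ^ n.

Definition rhs_prefactor (q a c : C) : C :=
  qpoch_inf (q ^ 2) (q ^ 2) * qpoch_inf (a * c) (q ^ 2)
  / (qpoch_inf (q ^ 2 * a) (q ^ 2) * qpoch_inf (q ^ 2 * c) (q ^ 2)).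

From Stdlib Require Import Reals ZArith Lia Lra.
From Coquelicot Require Import Coquelicot.
Open Scope C_scope.

(* Write Q = q^2.  The sequences
     alpha_r = (1 - Q^(2r+1)) Q^(-r) sum_(|j| <= r) (-1)^j q^(j^2),
     beta_k  = (q;Q)_k / ((-q;q)_(2k) (Q;Q)_k Q^k)
   satisfy beta_k = sum_(r <= k) alpha_r / ((Q;Q)_(k-r) (Q;Q)_(k+r+1)), i.e. they form a
   Bailey pair relative to Q.  After exchanging the order of summation and a telescoping sum
   of q-binomials, this is the identity sum_(|j| <= n) (-1)^j q^(j^2) [2n, n-j]_Q = (q;Q)_n^2,
   which follows from the q-Pascal rules by a recursion in n.  The two sides of the theorem
   are the two sides of Bailey's lemma for this pair, with rho1 = Q/a and rho2 = Q/c.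
   Bailey's lemma is proved at a finite level N from the q-Pfaff-Saalschütz summation; the
   N-dependent weights tend to 1 and to (ac;Q)_oo, and Tannery's theorem justifies the limit
   because both series are dominated by geometric series of ratio |ac| / |q|^2. *)

Fixpoint csum (f : nat -> C) (n : nat) : C :=
  match n with O => 0 | S m => csum f m + f m end.

Lemma csum_ext f g n : (forall k, (k < n)%nat -> f k = g k) -> csum f n = csum g n.
Proof.
  induction n as [|n IH]; intros H; simpl; auto.
  rewrite IH, H; [reflexivity | lia | intros; apply H; lia].
Qed.

Lemma csum_plus f g n : csum (fun k => f k + g k) n = csum f n + csum g n.
Proof. induction n; simpl; [ring | rewrite IHn; ring]. Qed.

Lemma csum_scal_l c f n : csum (fun k => c * f k) n = c * csum f n.
Proof. induction n; simpl; [ring | rewrite IHn; ring]. Qed.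

Lemma csum_S f n : csum f (S n) = csum f n + f n.
Proof. reflexivity. Qed.

Lemma csum_Sl f n : csum f (S n) = f O + csum (fun k => f (S k)) n.
Proof. induction n; simpl in *; [ring | rewrite IHn; ring]. Qed.

Lemma csum_split f m n : csum f (m + n) = csum f m + csum (fun k => f (m + k)%nat) n.
Proof.
  induction n; simpl; [rewrite Nat.add_0_r; ring|].
  rewrite Nat.add_succ_r. simpl. rewrite IHn. ring.
Qed.

Lemma sum_n_csum (f : nat -> C) n : sum_n f n = csum f (S n).
Proof. induction n; [rewrite sum_O; simpl; ring | rewrite sum_Sn, IHn; reflexivity]. Qed.

Lemma csum_triangle_swap (g : nat -> nat -> C) N :
  csum (fun k => csum (g k) (S k)) (S N) =
  csum (fun r => csum (fun m => g (r + m)%nat r) (S (N - r))) (S N).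
Proof.
  induction N as [|N IH]; [simpl; ring|].
  change (csum (fun k => csum (g k) (S k)) (S (S N))) with
    (csum (fun k => csum (g k) (S k)) (S N) + csum (g (S N)) (S (S N))).
  rewrite IH.
  change (csum (fun r => csum (fun m => g (r + m)%nat r) (S (S N - r))) (S (S N))) with
    (csum (fun r => csum (fun m => g (r + m)%nat r) (S (S N - r))) (S N)
     + csum (fun m => g (S N + m)%nat (S N)) (S (S N - S N))).
  replace (S N - S N)%nat with O by lia. simpl (csum _ 1). rewrite Nat.add_0_r.
  rewrite (csum_ext (fun r => csum (fun m => g (r + m)%nat r) (S (S N - r)))
    (fun r => csum (fun m => g (r + m)%nat r) (S (N - r)) + g (S N) r)).
  - rewrite csum_plus. simpl. ring.
  - intros k Hk. replace (S N - k)%nat with (S (N - k)) by lia. simpl.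
    replace (k + S (N - k))%nat with (S N) by lia. reflexivity.
Qed.

Lemma qpoch_S x p n : qpoch x p (S n) = qpoch x p n * (1 - x * p ^ n).
Proof. reflexivity. Qed.

Lemma qpoch_add x p m n : qpoch x p (m + n) = qpoch x p m * qpoch (x * p ^ m) p n.
Proof.
  induction n; simpl; [rewrite Nat.add_0_r; ring|].
  rewrite Nat.add_succ_r. simpl. rewrite IHn, Cpow_add_r. ring.
Qed.

Lemma qpoch_Sl x p n : qpoch x p (S n) = (1 - x) * qpoch (x * p) p n.
Proof.
  change (S n) with (1 + n)%nat. rewrite qpoch_add. simpl.
  f_equal; [ring | f_equal; ring].
Qed.

Lemma qpoch_neq0 x p n : (forall k, (k < n)%nat -> x * p ^ k <> 1) -> qpoch x p n <> 0.
Proof.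
  induction n; intros H; simpl.
  - intro E. injection E. lra.
  - apply Cmult_neq_0; [apply IHn; intros; apply H; lia|].
    intro E. apply (H n); [lia|].
    replace (x * p ^ n) with (1 - (1 - x * p ^ n)) by ring. rewrite E. ring.
Qed.

Lemma Cmult_neq_0_inv (x y : C) : x * y <> 0 -> x <> 0 /\ y <> 0.
Proof. intros H; split; intro E; apply H; rewrite E; ring. Qed.

Lemma Cpow_div (x y : C) k : y <> 0 -> (x / y) ^ k = x ^ k / y ^ k.
Proof. intros H. unfold Cdiv. rewrite Cpow_mult_l, Cpow_inv; auto. Qed.

Lemma Cpow_sqr_r (q : C) k : (q ^ 2) ^ k = q ^ k * q ^ k.
Proof. rewrite <- Cpow_mult_r, <- Cpow_add_r. f_equal. lia. Qed.

Lemma Cpow_m1_sqr i : (-1) ^ i * (-1) ^ i = 1.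
Proof. rewrite <- Cpow_mult_l. replace ((-1) * (-1) : C) with (1 : C) by ring. apply Cpow_1_l. Qed.

Lemma qpoch_mul_opp q m : qpoch q q m * qpoch (- q) q m = qpoch (q ^ 2) (q ^ 2) m.
Proof. induction m; [simpl; ring|]. rewrite !qpoch_S, <- IHm, Cpow_sqr_r. ring. Qed.

Lemma qpoch_double q k : qpoch q q (2 * k) = qpoch q (q ^ 2) k * qpoch (q ^ 2) (q ^ 2) k.
Proof.
  induction k as [|k IH]; [simpl; ring|].
  replace (2 * S k)%nat with (S (S (2 * k))) by lia.
  rewrite !qpoch_S, IH, !Cpow_sqr_r, (Cpow_S q (2 * k)).
  replace (2 * k)%nat with (k + k)%nat by lia. rewrite Cpow_add_r. ring.
Qed.

Definition qbinom (Q : C) (M m : nat) : C :=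
  qpoch Q Q M / (qpoch Q Q m * qpoch Q Q (M - m)).

Section QBinomial.
Variable Q : C.
Hypothesis HQ : forall k, qpoch Q Q k <> 0.

Let qpoch_S_neq0 k : qpoch Q Q k <> 0 /\ 1 - Q * Q ^ k <> 0.
Proof. apply Cmult_neq_0_inv, (HQ (S k)). Qed.

Lemma qbinom_0 M : qbinom Q M 0 = 1.
Proof. unfold qbinom. rewrite Nat.sub_0_r. simpl. field. apply HQ. Qed.

Lemma qbinom_diag M : qbinom Q M M = 1.
Proof. unfold qbinom. rewrite Nat.sub_diag. simpl. field. apply HQ. Qed.

Lemma qbinom_sym N i : (i <= N)%nat -> qbinom Q N i = qbinom Q N (N - i).
Proof.
  intros H. unfold qbinom. replace (N - (N - i))%nat with i by lia.
  rewrite (Cmult_comm (qpoch Q Q i)). reflexivity.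
Qed.

Lemma qbinom_pascal_l j l :
  qbinom Q (S (S (j + l))) (S j) = Q ^ S j * qbinom Q (S (j + l)) (S j) + qbinom Q (S (j + l)) j.
Proof.
  unfold qbinom.
  replace (S (S (j + l)) - S j)%nat with (S l) by lia.
  replace (S (j + l) - S j)%nat with l by lia.
  replace (S (j + l) - j)%nat with (S l) by lia.
  destruct (qpoch_S_neq0 j), (qpoch_S_neq0 l), (qpoch_S_neq0 (j + l)).
  simpl. rewrite Cpow_add_r. field. repeat split; auto.
Qed.

Lemma qbinom_pascal_r j l :
  qbinom Q (S (S (j + l))) (S j) = qbinom Q (S (j + l)) (S j) + Q ^ S l * qbinom Q (S (j + l)) j.
Proof.
  unfold qbinom.
  replace (S (S (j + l)) - S j)%nat with (S l) by lia.
  replace (S (j + l) - S j)%nat with l by lia.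
  replace (S (j + l) - j)%nat with (S l) by lia.
  destruct (qpoch_S_neq0 j), (qpoch_S_neq0 l), (qpoch_S_neq0 (j + l)).
  simpl. rewrite Cpow_add_r. field. repeat split; auto.
Qed.

End QBinomial.

(** * The q-Pfaff-Saalschütz summation *)

Section Saalschutz.
Variables Q B D : C.
Hypothesis HQ : forall k, qpoch Q Q k <> 0.

Definition saal_term (x : C) (M m : nat) : C :=
  qbinom Q M m * qpoch B Q m * qpoch D Q m * x ^ m * qpoch x Q (M - m)
  * qpoch (x * B * D * Q ^ m) Q (M - m).

(* Induction on [M]: Pascal's rule splits each [saal_term x (S M)] into a low and a high
   piece, and regrouping [saal_low x M m + saal_high x M (S m)] gives [saal_term (x * Q) M m]
   up to the factor [(1 - x B) (1 - x D)]. *)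
Let saal_low (x : C) (M m : nat) : C :=
  qbinom Q M m * qpoch B Q m * qpoch D Q m * x ^ m * (Q ^ m - x) * qpoch (x * Q) Q (M - m)
  * qpoch (x * B * D * Q ^ m) Q (S (M - m)).

Let saal_high (x : C) (M m : nat) : C :=
  match m with
  | O => 0
  | S j => qbinom Q M j * qpoch B Q (S j) * qpoch D Q (S j) * x ^ S j
           * qpoch (x * Q) Q (M - j) * qpoch (x * B * D * Q ^ S j) Q (M - j)
  end.

Let saal_term_first x M : saal_term x (S M) 0 = saal_low x M 0.
Proof.
  unfold saal_term, saal_low. rewrite !qbinom_0, !Nat.sub_0_r, (qpoch_Sl x) by auto.
  simpl. ring.
Qed.

Let saal_term_last x M : saal_term x (S M) (S M) = saal_high x M (S M).
Proof.
  unfold saal_term, saal_high. rewrite !qbinom_diag, !Nat.sub_diag by auto. simpl. ring.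
Qed.

Let saal_term_split x M j : (j < M)%nat ->
  saal_term x (S M) (S j) = saal_low x M (S j) + saal_high x M (S j).
Proof.
  intros Hj. destruct (Nat.le_exists_sub (S j) M Hj) as [l [El _]].
  replace M with (S (j + l)) in * by lia. clear El Hj.
  unfold saal_term, saal_low, saal_high.
  replace (S (S (j + l)) - S j)%nat with (S l) by lia.
  replace (S (j + l) - S j)%nat with l by lia.
  replace (S (j + l) - j)%nat with (S l) by lia.
  assert (E : qbinom Q (S (S (j + l))) (S j) * (1 - x) =
    qbinom Q (S (j + l)) (S j) * (Q ^ S j - x) + qbinom Q (S (j + l)) j * (1 - x * Q ^ S l)).
  { replace (qbinom Q (S (S (j + l))) (S j) * (1 - x)) with
      (qbinom Q (S (S (j + l))) (S j) - x * qbinom Q (S (S (j + l))) (S j)) by ring.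
    rewrite (qbinom_pascal_l Q HQ j l) at 1. rewrite (qbinom_pascal_r Q HQ j l). ring. }
  rewrite (qpoch_Sl x Q l), (qpoch_S (x * Q) Q l).
  set (P := qpoch (x * B * D * Q ^ S j) Q (S l)).
  set (b := qbinom Q (S (S (j + l))) (S j)) in *.
  transitivity ((b * (1 - x)) * (qpoch B Q (S j) * qpoch D Q (S j) * x ^ S j
                                  * qpoch (x * Q) Q l * P)); [ring|].
  rewrite E. simpl (Q ^ S l). ring.
Qed.

Let saal_recombine x M m : (m <= M)%nat ->
  saal_low x M m + saal_high x M (S m) = (1 - x * B) * (1 - x * D) * saal_term (x * Q) M m.
Proof.
  intros Hm. destruct (Nat.le_exists_sub m M Hm) as [l [El _]]. subst M.
  unfold saal_low, saal_high, saal_term.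
  replace (l + m - m)%nat with l by lia.
  rewrite qpoch_Sl.
  replace (x * B * D * Q ^ m * Q) with (x * B * D * Q ^ S m) by (simpl; ring).
  replace (x * Q * B * D * Q ^ m) with (x * B * D * Q ^ S m) by (simpl; ring).
  rewrite Cpow_mult_l. simpl. ring.
Qed.

Theorem qpfaff_saalschutz M : forall x,
  csum (saal_term x M) (S M) = qpoch (x * B) Q M * qpoch (x * D) Q M.
Proof.
  induction M as [|M IH]; intros x.
  - simpl. unfold saal_term. rewrite qbinom_0 by auto. simpl. ring.
  - rewrite csum_Sl, saal_term_first, (csum_S (fun k => saal_term x (S M) (S k))),
      saal_term_last.
    rewrite (csum_ext _ (fun k => saal_low x M (S k) + saal_high x M (S k)))
      by (intros; apply saal_term_split; auto).
    rewrite csum_plus.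
    transitivity (csum (saal_low x M) (S M) + csum (fun k => saal_high x M (S k)) (S M)).
    { rewrite (csum_Sl (saal_low x M)), (csum_S (fun k => saal_high x M (S k))). ring. }
    rewrite <- csum_plus, (csum_ext _ (fun m => (1 - x * B) * (1 - x * D) * saal_term (x * Q) M m))
      by (intros; apply saal_recombine; lia).
    rewrite csum_scal_l, IH, !qpoch_Sl.
    replace (x * Q * B) with (x * B * Q) by ring.
    replace (x * Q * D) with (x * D * Q) by ring. ring.
Qed.

End Saalschutz.

(** * A q-binomial theta identity *)

Section QBinomialSums.
Variable Q : C.
Hypothesis HQ : forall k, qpoch Q Q k <> 0.

Lemma csum_qbinom_S_l (f : nat -> C) N :
  csum (fun i => f i * qbinom Q (S N) i) (S (S N)) =
  csum (fun i => f i * Q ^ i * qbinom Q N i) (S N) + csum (fun i => f (S i) * qbinom Q N i) (S N).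
Proof.
  rewrite csum_Sl, csum_S.
  rewrite (csum_ext (fun k => f (S k) * qbinom Q (S N) (S k))
     (fun k => f (S k) * Q ^ S k * qbinom Q N (S k) + f (S k) * qbinom Q N k)).
  2:{ intros k Hk. destruct (Nat.le_exists_sub (S k) N Hk) as [l [El _]].
      replace N with (S (k + l)) by lia. rewrite (qbinom_pascal_l Q HQ k l). ring. }
  rewrite csum_plus, (csum_Sl (fun i => f i * Q ^ i * qbinom Q N i)), csum_S.
  rewrite !qbinom_0, !qbinom_diag by auto. simpl. ring.
Qed.

Lemma csum_qbinom_S_r (f : nat -> C) N :
  csum (fun i => f i * qbinom Q (S N) i) (S (S N)) =
  csum (fun i => f i * qbinom Q N i) (S N)
  + csum (fun i => f (S i) * Q ^ (N - i) * qbinom Q N i) (S N).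
Proof.
  rewrite csum_Sl, csum_S.
  rewrite (csum_ext (fun k => f (S k) * qbinom Q (S N) (S k))
     (fun k => f (S k) * qbinom Q N (S k) + f (S k) * Q ^ (N - k) * qbinom Q N k)).
  2:{ intros k Hk. destruct (Nat.le_exists_sub (S k) N Hk) as [l [El _]].
      replace N with (S (k + l)) by lia. rewrite (qbinom_pascal_r Q HQ k l).
      replace (S (k + l) - k)%nat with (S l) by lia. ring. }
  rewrite csum_plus, (csum_Sl (fun i => f i * qbinom Q N i)), csum_S.
  rewrite !qbinom_0, !qbinom_diag, Nat.sub_diag by auto. simpl. ring.
Qed.

End QBinomialSums.

Lemma abs_diff_le a b : (a <= b)%nat -> Z.abs_nat (Z.of_nat a - Z.of_nat b) = (b - a)%nat.
Proof. intros. apply Nat2Z.inj. rewrite Nat2Z.inj_abs_nat. lia. Qed.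

Lemma abs_diff_ge a b : (b <= a)%nat -> Z.abs_nat (Z.of_nat a - Z.of_nat b) = (a - b)%nat.
Proof. intros. apply Nat2Z.inj. rewrite Nat2Z.inj_abs_nat. lia. Qed.

Lemma csum_abs_diff (G : nat -> C) n :
  csum (fun i => G (Z.abs_nat (Z.of_nat i - Z.of_nat n))) (S (2 * n)) =
  G O + 2 * csum (fun s => G (S s)) n.
Proof.
  induction n as [|n IH]; [simpl; ring|].
  replace (S (2 * S n)) with (S (S (S (2 * n)))) by lia.
  rewrite csum_Sl, csum_S.
  rewrite (csum_ext (fun k => G (Z.abs_nat (Z.of_nat (S k) - Z.of_nat (S n))))
                    (fun i => G (Z.abs_nat (Z.of_nat i - Z.of_nat n))))
    by (intros k _; do 2 f_equal; lia).
  rewrite IH, abs_diff_le, abs_diff_ge by lia.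
  replace (S n - 0)%nat with (S n) by lia.
  replace (S (S (2 * n)) - S n)%nat with (S n) by lia.
  simpl. ring.
Qed.

Section ThetaIdentity.
Variable q : C.
Hypothesis Hq : q <> 0.
Hypothesis HQ : forall k, qpoch (q ^ 2) (q ^ 2) k <> 0.

Definition theta_weight (n i : nat) : C := (-1) ^ i * q ^ (i * i) / q ^ (2 * (i * n)).

Definition theta_qbinom_sum (n : nat) : C :=
  csum (fun i => theta_weight n i * qbinom (q ^ 2) (2 * n) i) (S (2 * n)).

Let theta_weight_pascal n i : (i <= 2 * n)%nat ->
  theta_weight (S n) i * (q ^ 2) ^ i
  + theta_weight (S n) (S i) * (q ^ 2) ^ S i * (q ^ 2) ^ (2 * n - i)
  + theta_weight (S n) (S i) + theta_weight (S n) (S (S i)) * (q ^ 2) ^ (2 * n - i)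
  = (2 - q ^ S (2 * n) - / q ^ S (2 * n)) * theta_weight n i.
Proof.
  intros Hi. destruct (Nat.le_exists_sub i (2 * n) Hi) as [d [Ed _]].
  replace (2 * n - i)%nat with d by lia.
  unfold theta_weight. rewrite !Cpow_sqr_r.
  assert (Hqi : q ^ i <> 0) by (apply Cpow_nz; auto).
  assert (Hqn : q ^ n <> 0) by (apply Cpow_nz; auto).
  assert (Hqin : q ^ (i * n) <> 0) by (apply Cpow_nz; auto).
  assert (Hqd : q ^ d = q ^ n * q ^ n / q ^ i).
  { rewrite <- Cpow_add_r. replace (n + n)%nat with (d + i)%nat by lia.
    rewrite Cpow_add_r. field. auto. }
  replace (S i * S i)%nat with (i * i + i + i + 1)%nat by ring.
  replace (S (S i) * S (S i))%nat with (i * i + i + i + i + i + 4)%nat by ring.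
  replace (2 * (i * S n))%nat with (i * n + i * n + i + i)%nat by ring.
  replace (2 * (S i * S n))%nat with (i * n + i * n + i + i + n + n + 2)%nat by ring.
  replace (2 * (S (S i) * S n))%nat with (i * n + i * n + i + i + n + n + n + n + 4)%nat by ring.
  replace (2 * (i * n))%nat with (i * n + i * n)%nat by ring.
  replace (S (2 * n)) with (n + n + 1)%nat by lia.
  rewrite !Cpow_add_r, Hqd. simpl. field. repeat split; auto.
Qed.

Lemma theta_qbinom_sum_S n :
  theta_qbinom_sum (S n) = (2 - q ^ S (2 * n) - / q ^ S (2 * n)) * theta_qbinom_sum n.
Proof.
  unfold theta_qbinom_sum. replace (2 * S n)%nat with (S (S (2 * n))) by lia.
  rewrite (csum_qbinom_S_l _ HQ), (csum_qbinom_S_r _ HQ (fun i => theta_weight (S n) i * _)),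
    (csum_qbinom_S_r _ HQ (fun i => theta_weight (S n) (S i))).
  rewrite <- !csum_plus, <- csum_scal_l. apply csum_ext. intros i Hi.
  rewrite Cmult_assoc, <- theta_weight_pascal by lia. ring.
Qed.

Lemma theta_qbinom_sum_closed n :
  theta_qbinom_sum n * (-1) ^ n * q ^ (n * n) = qpoch q (q ^ 2) n * qpoch q (q ^ 2) n.
Proof.
  induction n as [|n IH].
  - unfold theta_qbinom_sum, theta_weight. simpl. rewrite qbinom_0 by auto. field.
  - rewrite theta_qbinom_sum_S, !qpoch_S.
    transitivity ((theta_qbinom_sum n * (-1) ^ n * q ^ (n * n))
                  * (1 - q * (q ^ 2) ^ n) * (1 - q * (q ^ 2) ^ n)); [| rewrite IH; ring].
    replace (S n * S n)%nat with (n * n + n + n + 1)%nat by ring.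
    replace (S (2 * n)) with (n + n + 1)%nat by lia.
    rewrite !Cpow_add_r, Cpow_sqr_r, (Cpow_S (-1) n).
    assert (Hqn : q ^ n <> 0) by (apply Cpow_nz; auto).
    simpl. field. auto.
Qed.

Definition theta_coef (s : nat) : C :=
  match s with O => 1 | S _ => 2 * (-1) ^ s * q ^ (s * s) end.

Let theta_summand_fold n i : (i <= 2 * n)%nat ->
  theta_weight n i * qbinom (q ^ 2) (2 * n) i * (-1) ^ n * q ^ (n * n) =
  (fun s => (-1) ^ s * q ^ (s * s) * qbinom (q ^ 2) (2 * n) (n - s))
    (Z.abs_nat (Z.of_nat i - Z.of_nat n)).
Proof.
  intros Hi. cbv beta. unfold theta_weight.
  destruct (Nat.le_gt_cases i n) as [H|H].
  - rewrite abs_diff_le by lia. destruct (Nat.le_exists_sub i n H) as [e [Ee _]].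
    subst n. replace (e + i - i)%nat with e by lia.
    replace (e + i - e)%nat with i by lia.
    replace ((e + i) * (e + i))%nat with (e * e + i * i + i * e + i * e)%nat by ring.
    replace (2 * (i * (e + i)))%nat with (i * i + i * i + i * e + i * e)%nat by ring.
    rewrite !Cpow_add_r.
    assert (H1 : q ^ (i * i) <> 0) by (apply Cpow_nz; auto).
    assert (H2 : q ^ (i * e) <> 0) by (apply Cpow_nz; auto).
    match goal with |- _ = ?R => transitivity (((-1) ^ i * (-1) ^ i) * R) end;
      [field; auto | rewrite Cpow_m1_sqr; ring].
  - rewrite abs_diff_ge by lia. destruct (Nat.le_exists_sub n i ltac:(lia)) as [e [Ee _]].
    subst i. replace (e + n - n)%nat with e by lia.
    rewrite qbinom_sym by (auto; lia).
    replace (2 * n - (e + n))%nat with (n - e)%nat by lia.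
    replace ((e + n) * (e + n))%nat with (e * e + n * n + n * e + n * e)%nat by ring.
    replace (2 * ((e + n) * n))%nat with (n * n + n * n + n * e + n * e)%nat by ring.
    rewrite !Cpow_add_r.
    assert (H1 : q ^ (n * n) <> 0) by (apply Cpow_nz; auto).
    assert (H2 : q ^ (n * e) <> 0) by (apply Cpow_nz; auto).
    match goal with |- _ = ?R => transitivity (((-1) ^ n * (-1) ^ n) * R) end;
      [field; auto | rewrite Cpow_m1_sqr; ring].
Qed.

Theorem theta_coef_qbinom_sum n :
  csum (fun s => theta_coef s * qbinom (q ^ 2) (2 * n) (n - s)) (S n) =
  qpoch q (q ^ 2) n * qpoch q (q ^ 2) n.
Proof.
  rewrite <- theta_qbinom_sum_closed. unfold theta_qbinom_sum.
  transitivity (csum (fun i => theta_weight n i * qbinom (q ^ 2) (2 * n) i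
                               * (-1) ^ n * q ^ (n * n)) (S (2 * n))).
  2:{ rewrite <- Cmult_assoc, Cmult_comm, <- csum_scal_l. apply csum_ext. intros. ring. }
  rewrite (csum_ext (fun i => theta_weight n i * qbinom (q ^ 2) (2 * n) i * (-1) ^ n * q ^ (n * n))
    (fun i => (fun s => (-1) ^ s * q ^ (s * s) * qbinom (q ^ 2) (2 * n) (n - s))
    (Z.abs_nat (Z.of_nat i - Z.of_nat n)))) by (intros; apply theta_summand_fold; lia).
  rewrite (csum_abs_diff (fun s => (-1) ^ s * q ^ (s * s) * qbinom (q ^ 2) (2 * n) (n - s))),
    csum_Sl, <- csum_scal_l.
  simpl. f_equal; [ring|]. apply csum_ext. intros. simpl. ring.
Qed.

Lemma csum_theta_abs_diff n :
  csum (fun i => (-1) ^ Z.abs_nat (Z.of_nat i - Z.of_nat n) *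
     q ^ (Z.abs_nat (Z.of_nat i - Z.of_nat n) * Z.abs_nat (Z.of_nat i - Z.of_nat n))) (S (2 * n))
  = csum theta_coef (S n).
Proof.
  rewrite (csum_abs_diff (fun s => (-1) ^ s * q ^ (s * s))), csum_Sl, <- csum_scal_l.
  simpl. f_equal; [ring|]. apply csum_ext. intros. simpl. ring.
Qed.

End ThetaIdentity.

(** * A Bailey pair relative to [q ^ 2] *)

Definition alpha_factor (Q : C) (r : nat) : C := (1 - Q ^ S (2 * r)) / Q ^ r.

Section AlphaTelescope.
Variable Q : C.
Hypothesis HQ0 : Q <> 0.
Hypothesis HQ : forall k, qpoch Q Q k <> 0.

Let telescope_step s d :
  qbinom Q (S (2 * (s + S d))) (s + S d - s) * alpha_factor Q s
  + alpha_factor Q (s + S d) * qbinom Q (2 * (s + S d)) d =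
  alpha_factor Q (s + S d) * qbinom Q (2 * (s + S d)) (S d).
Proof.
  unfold alpha_factor, qbinom.
  replace (s + S d - s)%nat with (S d) by lia.
  replace (S (2 * (s + S d)) - S d)%nat with (S (2 * s + d + 1)) by lia.
  replace (2 * (s + S d) - d)%nat with (S (2 * s + d + 1)) by lia.
  replace (2 * (s + S d) - S d)%nat with (2 * s + d + 1)%nat by lia.
  assert (Em : Q ^ (2 * (s + S d)) = Q ^ s * Q ^ s * Q ^ d * Q ^ d * Q * Q).
  { replace (2 * (s + S d))%nat with (s + s + d + d + 1 + 1)%nat by lia.
    rewrite !Cpow_add_r. simpl. ring. }
  assert (Eu : Q ^ (2 * s + d + 1) = Q ^ s * Q ^ s * Q ^ d * Q).
  { replace (2 * s + d + 1)%nat with (s + s + d + 1)%nat by lia.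
    rewrite !Cpow_add_r. simpl. ring. }
  assert (Ek : Q ^ (s + S d) = Q ^ s * Q ^ d * Q).
  { replace (s + S d)%nat with (s + d + 1)%nat by lia. rewrite !Cpow_add_r. simpl. ring. }
  assert (E2s : Q ^ (2 * s) = Q ^ s * Q ^ s).
  { replace (2 * s)%nat with (s + s)%nat by lia. apply Cpow_add_r. }
  set (u := (2 * s + d + 1)%nat) in *.
  set (m := (2 * (s + S d))%nat) in *.
  rewrite !qpoch_S, !Cpow_S, Em, Eu, Ek, E2s.
  destruct (Cmult_neq_0_inv _ _ (HQ (S d))) as [H1 H2].
  destruct (Cmult_neq_0_inv _ _ (HQ (S u))) as [H3 H4]. rewrite Eu in H4.
  assert (Hs : Q ^ s <> 0) by (apply Cpow_nz; auto).
  assert (Hd : Q ^ d <> 0) by (apply Cpow_nz; auto).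
  assert (Hm := HQ m).
  field. repeat split; auto.
Qed.

Lemma csum_qbinom_alpha_factor d : forall s k, (s + d = k)%nat ->
  csum (fun m => qbinom Q (S (2 * k)) (k - (s + m)) * alpha_factor Q (s + m)) (S d) =
  alpha_factor Q k * qbinom Q (2 * k) d.
Proof.
  induction d as [|d IH]; intros s k Hk.
  - simpl. rewrite !Nat.add_0_r in *. subst k.
    rewrite Nat.sub_diag, !qbinom_0 by auto. ring.
  - rewrite csum_Sl.
    rewrite (csum_ext _ (fun m => qbinom Q (S (2 * k)) (k - (S s + m)) * alpha_factor Q (S s + m)))
      by (intros; rewrite Nat.add_succ_r; reflexivity).
    rewrite (IH (S s) k) by lia. rewrite Nat.add_0_r. subst k. apply telescope_step.
Qed.

End AlphaTelescope.

Section BaileyPair.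
Variable q : C.
Hypothesis Hq : q <> 0.
Hypothesis HQ : forall k, qpoch (q ^ 2) (q ^ 2) k <> 0.
Hypothesis Hq1 : forall k, qpoch q (q ^ 2) k <> 0.
Hypothesis Hmq : forall k, qpoch (- q) q k <> 0.

Local Notation Q := (q ^ 2).

Definition bailey_alpha (r : nat) : C := alpha_factor Q r * csum (theta_coef q) (S r).

Definition bailey_beta (k : nat) : C :=
  qpoch q Q k / (qpoch (- q) q (2 * k) * qpoch Q Q k) / Q ^ k.

Let csum_qbinom_bailey_alpha k :
  csum (fun r => qbinom Q (S (2 * k)) (k - r) * bailey_alpha r) (S k) =
  alpha_factor Q k * (qpoch q Q k * qpoch q Q k).
Proof.
  assert (HQ0 : Q <> 0) by (apply Cpow_nz; auto).
  unfold bailey_alpha.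
  rewrite (csum_ext _ (fun r => csum (fun s => qbinom Q (S (2 * k)) (k - r) * alpha_factor Q r
                                              * theta_coef q s) (S r)))
    by (intros; rewrite Cmult_assoc, <- csum_scal_l; reflexivity).
  rewrite (csum_triangle_swap (fun r s => qbinom Q (S (2 * k)) (k - r) * alpha_factor Q r
                                          * theta_coef q s)).
  rewrite (csum_ext _ (fun s => alpha_factor Q k * (theta_coef q s * qbinom Q (2 * k) (k - s)))).
  2:{ intros s Hs.
      rewrite (csum_ext _ (fun m => theta_coef q s *
        (qbinom Q (S (2 * k)) (k - (s + m)) * alpha_factor Q (s + m)))) by (intros; ring).
      rewrite csum_scal_l, (csum_qbinom_alpha_factor Q HQ0 HQ) by lia. ring. }
  rewrite csum_scal_l, theta_coef_qbinom_sum by auto. reflexivity.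
Qed.

Theorem bailey_pair k :
  bailey_beta k =
  csum (fun r => bailey_alpha r / (qpoch Q Q (k - r) * qpoch Q Q (S (k + r)))) (S k).
Proof.
  assert (HQ0 : Q <> 0) by (apply Cpow_nz; auto).
  rewrite (csum_ext _ (fun r =>
    / qpoch Q Q (S (2 * k)) * (qbinom Q (S (2 * k)) (k - r) * bailey_alpha r))).
  2:{ intros r Hr. unfold qbinom.
      replace (S (2 * k) - (k - r))%nat with (S (k + r)) by lia.
      assert (H1 := HQ (k - r)). assert (H2 := HQ (S (k + r))).
      field. auto. }
  rewrite csum_scal_l, csum_qbinom_bailey_alpha. unfold bailey_beta, alpha_factor.
  assert (H0 := HQ (S (2 * k))). rewrite qpoch_S in *.
  destruct (Cmult_neq_0_inv _ _ H0) as [H5 H6].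
  replace (qpoch Q Q (2 * k)) with (qpoch q Q k * qpoch Q Q k * qpoch (- q) q (2 * k))
    by (rewrite <- (qpoch_mul_opp q (2 * k)), (qpoch_double q k); ring).
  rewrite (Cpow_S Q (2 * k)).
  assert (H1 := Hq1 k). assert (H2 := HQ k). assert (H3 := Hmq (2 * k)).
  assert (H4 : Q ^ k <> 0) by (apply Cpow_nz; auto).
  field. repeat split; auto.
Qed.

End BaileyPair.

(** * The finite form of Bailey's lemma *)

Section FiniteBailey.
Variables q a c : C.
Hypothesis Hq : q <> 0.
Hypothesis Ha : a <> 0.
Hypothesis Hc : c <> 0.
Hypothesis HQ : forall k, qpoch (q ^ 2) (q ^ 2) k <> 0.
Hypothesis HQa : forall k, qpoch (q ^ 2 * a) (q ^ 2) k <> 0.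
Hypothesis HQc : forall k, qpoch (q ^ 2 * c) (q ^ 2) k <> 0.
Hypothesis Hq1 : forall k, qpoch q (q ^ 2) k <> 0.
Hypothesis Hmq : forall k, qpoch (- q) q k <> 0.

Local Notation Q := (q ^ 2).

Let HQ0 : Q <> 0.
Proof. apply Cpow_nz; auto. Qed.

Let PP k := qpoch (Q / a) Q k * qpoch (Q / c) Q k.
Let FF N k := PP k * (a * c) ^ k * qpoch (a * c) Q (N - k) / qpoch Q Q (N - k).

Let csum_saalschutz_weights N r : (r <= N)%nat ->
  csum (fun m => FF N (r + m) / (qpoch Q Q m * qpoch Q Q (S (2 * r + m)))) (S (N - r)) =
  PP r * (a * c) ^ r * qpoch (Q * a) Q N * qpoch (Q * c) Q N /
    (qpoch (Q * a) Q r * qpoch (Q * c) Q r * qpoch Q Q (N - r) * qpoch Q Q (S (N + r))).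
Proof.
  intros Hr. destruct (Nat.le_exists_sub r N Hr) as [M [EM _]]. subst N.
  replace (M + r - r)%nat with M by lia.
  set (K := PP r * (a * c) ^ r / (qpoch Q Q M * qpoch Q Q (S (2 * r + M)))).
  rewrite (csum_ext _ (fun m => K * saal_term Q (Q / a * Q ^ r) (Q / c * Q ^ r) (a * c) M m)).
  2:{ intros m Hm. destruct (Nat.le_exists_sub m M ltac:(lia)) as [e [Ee _]]. subst M.
      unfold FF, K, saal_term, PP, qbinom.
      replace (e + m + r - (r + m))%nat with e by lia.
      replace (e + m - m)%nat with e by lia.
      replace (S (2 * r + (e + m))) with (S (2 * r + m) + e)%nat by lia.
      rewrite (qpoch_add Q Q (S (2 * r + m)) e).
      replace (a * c * (Q / a * Q ^ r) * (Q / c * Q ^ r) * Q ^ m) with (Q * Q ^ S (2 * r + m)).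
      2:{ replace (S (2 * r + m)) with (r + r + m + 1)%nat by lia.
          rewrite !Cpow_add_r. field. auto. }
      rewrite !qpoch_add, Cpow_add_r.
      assert (H1 := HQ e). assert (H2 := HQ m). assert (H3 := HQ (S (2 * r + m))).
      assert (H4 := HQ (S (2 * r + m) + e)%nat). rewrite qpoch_add in H4.
      destruct (Cmult_neq_0_inv _ _ H4) as [_ H4'].
      assert (H5 := HQ (e + m)%nat). rewrite qpoch_add in H5.
      destruct (Cmult_neq_0_inv _ _ H5) as [H5' H6].
      field. repeat split; auto. }
  rewrite csum_scal_l, (qpfaff_saalschutz Q _ _ HQ M (a * c)).
  unfold K. replace (M + r)%nat with (r + M)%nat by lia.
  rewrite !(qpoch_add (Q * a) Q r M), !(qpoch_add (Q * c) Q r M).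
  replace (a * c * (Q / a * Q ^ r)) with (Q * c * Q ^ r) by (field; auto).
  replace (a * c * (Q / c * Q ^ r)) with (Q * a * Q ^ r) by (field; auto).
  replace (S (r + M + r)) with (S (2 * r + M)) by lia.
  assert (H1 := HQ M). assert (H2 := HQ (S (2 * r + M))).
  assert (H3 := HQa r). assert (H4 := HQc r).
  field. repeat split; auto.
Qed.

Lemma lhs_term_bailey_alpha r : lhs_term q a c r =
  bailey_alpha q r * (PP r * (a * c) ^ r / (qpoch (Q * a) Q r * qpoch (Q * c) Q r)).
Proof.
  unfold lhs_term. rewrite sum_n_csum.
  assert (H1 := HQa r). assert (H2 := HQc r).
  assert (H3 : q ^ (2 * r) <> 0) by (apply Cpow_nz; auto).
  rewrite (csum_ext _ (fun i => ((1 - q ^ (4 * r + 2)) / q ^ (2 * r) *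
      (PP r * (a * c) ^ r / (qpoch (Q * a) Q r * qpoch (Q * c) Q r))) *
     ((-1) ^ Z.abs_nat (Z.of_nat i - Z.of_nat r) *
      q ^ (Z.abs_nat (Z.of_nat i - Z.of_nat r) * Z.abs_nat (Z.of_nat i - Z.of_nat r))))).
  2:{ intros i Hi. unfold lhs_inner, PP. cbv zeta. field. auto. }
  rewrite csum_scal_l, csum_theta_abs_diff. unfold bailey_alpha, alpha_factor.
  rewrite <- !Cpow_mult_r. replace (2 * S (2 * r))%nat with (4 * r + 2)%nat by lia.
  ring.
Qed.

Lemma rhs_term_bailey_beta k : rhs_term q a c k = PP k * (a * c) ^ k * bailey_beta q k.
Proof.
  unfold rhs_term, PP, bailey_beta. rewrite Cpow_div by auto.
  assert (H1 := Hmq (2 * k)). assert (H2 := HQ k).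
  assert (H3 : Q ^ k <> 0) by (apply Cpow_nz; auto).
  field. repeat split; auto.
Qed.

(* Insert the Bailey pair on the right, exchange the two sums and evaluate the inner one by
   the q-Pfaff-Saalschütz summation.  As [N] grows, the weights on the left tend to [1] and
   those on the right to [(a c; q ^ 2)_oo]. *)
Theorem finite_bailey_identity N :
  csum (fun r => lhs_term q a c r * (qpoch Q Q N * qpoch Q Q (S N) /
                   (qpoch Q Q (N - r) * qpoch Q Q (S (N + r))))) (S N) =
  qpoch Q Q (S N) / (qpoch (Q * a) Q N * qpoch (Q * c) Q N) *
  csum (fun k => rhs_term q a c k * (qpoch (a * c) Q (N - k) * qpoch Q Q N / qpoch Q Q (N - k)))
    (S N).
Proof.
  set (G k r := FF N k * bailey_alpha q r / (qpoch Q Q (k - r) * qpoch Q Q (S (k + r)))).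
  rewrite (csum_ext (fun k => rhs_term q a c k * _) (fun k => qpoch Q Q N * csum (G k) (S k))).
  2:{ intros k Hk. rewrite rhs_term_bailey_beta, bailey_pair by auto. unfold G.
      rewrite (csum_ext (fun r => FF N k * bailey_alpha q r / _)
         (fun r => FF N k * (bailey_alpha q r / (qpoch Q Q (k - r) * qpoch Q Q (S (k + r))))))
        by (intros; unfold Cdiv; ring).
      rewrite csum_scal_l. unfold FF. assert (H := HQ (N - k)). field. auto. }
  rewrite csum_scal_l, (csum_triangle_swap G).
  rewrite (csum_ext (fun r => csum (fun m => G (r + m)%nat r) (S (N - r)))
     (fun r => bailey_alpha q r *
        csum (fun m => FF N (r + m) / (qpoch Q Q m * qpoch Q Q (S (2 * r + m)))) (S (N - r)))).
  2:{ intros r Hr. rewrite <- csum_scal_l. apply csum_ext. intros m Hm. unfold G.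
      replace (r + m - r)%nat with m by lia. replace (S (r + m + r)) with (S (2 * r + m)) by lia.
      unfold Cdiv; ring. }
  rewrite <- !csum_scal_l. apply csum_ext. intros r Hr.
  rewrite csum_saalschutz_weights, lhs_term_bailey_alpha by lia.
  assert (H1 := HQa N). assert (H2 := HQc N). assert (H3 := HQa r). assert (H4 := HQc r).
  assert (H5 := HQ (N - r)). assert (H6 := HQ (S (N + r))).
  field. repeat split; auto.
Qed.

End FiniteBailey.

Definition is_lim_Cseq (u : nat -> C) (L : C) : Prop :=
  is_lim_seq (fun n => Cmod (u n - L)) 0.

Section ComplexLimits.
Local Open Scope R_scope.

Lemma Cmod_sub_sym x y : Cmod (x - y) = Cmod (y - x).
Proof. replace (x - y)%C with (- (y - x))%C by ring. apply Cmod_opp. Qed.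

Lemma Cmod_le_sub x y : Cmod x <= Cmod y + Cmod (x - y).
Proof. replace x with (y + (x - y))%C at 1 by ring. apply Cmod_triangle. Qed.

Lemma is_lim_Cseq_bound_loc u L (r : nat -> R) :
  eventually (fun n => Cmod (u n - L) <= r n) -> is_lim_seq r 0 -> is_lim_Cseq u L.
Proof.
  intros [N HN] Hr. apply is_lim_seq_le_le_loc with (fun _ => 0) r; auto.
  - exists N. intros n Hn. split; [apply Cmod_ge_0 | auto].
  - apply is_lim_seq_const.
Qed.

Lemma is_lim_Cseq_bound u L (r : nat -> R) :
  (forall n, Cmod (u n - L) <= r n) -> is_lim_seq r 0 -> is_lim_Cseq u L.
Proof. intros H. apply is_lim_Cseq_bound_loc. exists O. auto. Qed.

Lemma is_lim_Cseq_const L : is_lim_Cseq (fun _ => L) L.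
Proof.
  apply is_lim_Cseq_bound with (fun _ => 0); [|apply is_lim_seq_const].
  intros. replace (L - L)%C with (RtoC 0) by ring. rewrite Cmod_0. lra.
Qed.

Lemma is_lim_Cseq_ext_loc u v L :
  eventually (fun n => u n = v n) -> is_lim_Cseq u L -> is_lim_Cseq v L.
Proof.
  intros [N HN] H. apply is_lim_seq_ext_loc with (fun n => Cmod (u n - L)); auto.
  exists N. intros n Hn. rewrite HN; auto.
Qed.

Lemma is_lim_Cseq_ext u v L : (forall n, u n = v n) -> is_lim_Cseq u L -> is_lim_Cseq v L.
Proof. intros H. apply is_lim_Cseq_ext_loc. exists O. auto. Qed.

Lemma is_lim_Cseq_incr_n u L k : is_lim_Cseq u L <-> is_lim_Cseq (fun n => u (n + k)%nat) L.
Proof. apply (is_lim_seq_incr_n (fun n => Cmod (u n - L))). Qed.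

Lemma is_lim_Cseq_Cmod u L : is_lim_Cseq u L -> is_lim_seq (fun n => Cmod (u n)) (Cmod L).
Proof.
  intros H. apply is_lim_seq_le_le with (fun n => Cmod L - Cmod (u n - L))
      (fun n => Cmod L + Cmod (u n - L)).
  - intros n. assert (T1 := Cmod_le_sub L (u n)). assert (T2 := Cmod_le_sub (u n) L).
    rewrite Cmod_sub_sym in T1. lra.
  - replace (Finite (Cmod L)) with (Finite (Cmod L - 0)) by (f_equal; ring).
    apply is_lim_seq_minus'; [apply is_lim_seq_const | apply H].
  - replace (Finite (Cmod L)) with (Finite (Cmod L + 0)) by (f_equal; ring).
    apply is_lim_seq_plus'; [apply is_lim_seq_const | apply H].
Qed.

Lemma is_lim_Cseq_Cmod_le u L B :
  is_lim_Cseq u L -> eventually (fun n => Cmod (u n) <= B) -> Cmod L <= B.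
Proof.
  intros H HB. apply is_lim_Cseq_Cmod in H.
  exact (is_lim_seq_le_loc _ _ _ _ HB H (is_lim_seq_const B)).
Qed.

Lemma is_lim_Cseq_Cmod_ge u L B :
  is_lim_Cseq u L -> eventually (fun n => B <= Cmod (u n)) -> B <= Cmod L.
Proof.
  intros H HB. apply is_lim_Cseq_Cmod in H.
  exact (is_lim_seq_le_loc _ _ _ _ HB (is_lim_seq_const B) H).
Qed.

Lemma is_lim_Cseq_plus u v L M :
  is_lim_Cseq u L -> is_lim_Cseq v M -> is_lim_Cseq (fun n => u n + v n)%C (L + M)%C.
Proof.
  intros Hu Hv. apply is_lim_Cseq_bound with (fun n => Cmod (u n - L) + Cmod (v n - M)).
  - intros n. replace (u n + v n - (L + M))%C with ((u n - L) + (v n - M))%C by ring.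
    apply Cmod_triangle.
  - replace (Finite 0) with (Finite (0 + 0)) by (f_equal; ring).
    apply is_lim_seq_plus'; auto.
Qed.

Lemma is_lim_Cseq_mult u v L M :
  is_lim_Cseq u L -> is_lim_Cseq v M -> is_lim_Cseq (fun n => u n * v n)%C (L * M)%C.
Proof.
  intros Hu Hv. apply is_lim_Cseq_bound with
    (fun n => (Cmod L + Cmod (u n - L)) * Cmod (v n - M) + Cmod (u n - L) * Cmod M).
  - intros n. replace (u n * v n - L * M)%C with (u n * (v n - M) + (u n - L) * M)%C by ring.
    eapply Rle_trans; [apply Cmod_triangle|]. rewrite !Cmod_mult.
    apply Rplus_le_compat_r, Rmult_le_compat_r; [apply Cmod_ge_0 | apply Cmod_le_sub].
  - replace (Finite 0) with (Finite ((Cmod L + 0) * 0 + 0 * Cmod M)) by (f_equal; ring).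
    apply is_lim_seq_plus'; apply is_lim_seq_mult'; auto using is_lim_seq_const.
    apply is_lim_seq_plus'; auto using is_lim_seq_const.
Qed.

Lemma is_lim_Cseq_inv u L :
  is_lim_Cseq u L -> L <> 0%C -> is_lim_Cseq (fun n => / u n)%C (/ L)%C.
Proof.
  intros Hu HL. apply Cmod_gt_0 in HL.
  assert (Ev : eventually (fun n => Cmod L / 2 <= Cmod (u n))).
  { apply is_lim_Cseq_Cmod, is_lim_seq_spec in Hu.
    destruct (Hu (mkposreal (Cmod L / 2) ltac:(lra))) as [N HN]. exists N. intros n Hn.
    specialize (HN n Hn). simpl in HN. apply Rabs_lt_between in HN. lra. }
  apply is_lim_Cseq_bound_loc with (fun n => 2 / (Cmod L * Cmod L) * Cmod (u n - L)).
  - destruct Ev as [N HN]. exists N. intros n Hn. specialize (HN n Hn).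
    assert (Hun : u n <> 0%C) by (intro E; rewrite E, Cmod_0 in HN; lra).
    assert (HL0 : L <> 0%C) by (intro E; rewrite E, Cmod_0 in HL; lra).
    replace (/ u n - / L)%C with ((L - u n) / (u n * L))%C by (field; auto).
    rewrite Cmod_div by (apply Cmult_neq_0; auto). rewrite Cmod_mult, Cmod_sub_sym.
    assert (0 <= Cmod (u n - L)) by apply Cmod_ge_0.
    apply Rle_trans with (Cmod (u n - L) / (Cmod L / 2 * Cmod L)).
    + apply Rmult_le_compat_l; [lra|]. apply Rinv_le_contravar; nra.
    + right. field. lra.
  - replace (Finite 0) with (Finite (2 / (Cmod L * Cmod L) * 0)) by (f_equal; ring).
    apply is_lim_seq_mult'; [apply is_lim_seq_const | apply Hu].
Qed.

Lemma is_lim_Cseq_unique u L M : is_lim_Cseq u L -> is_lim_Cseq u M -> L = M.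
Proof.
  intros HL HM.
  assert (H : is_lim_Cseq (fun n => u n - u n)%C (L - M)%C).
  { apply is_lim_Cseq_plus; auto. apply (is_lim_Cseq_ext (fun n => -1 * u n)%C);
      [intros; ring|]. replace (- M)%C with (-1 * M)%C by ring.
    apply is_lim_Cseq_mult; [apply is_lim_Cseq_const | auto]. }
  assert (Hle : Cmod (L - M) <= 0).
  { apply (is_lim_Cseq_Cmod_le _ _ _ H). exists O. intros n _.
    replace (u n - u n)%C with (RtoC 0) by ring. rewrite Cmod_0. lra. }
  assert (E : (L - M)%C = 0%C) by (apply Cmod_eq_0; assert (T := Cmod_ge_0 (L - M)); lra).
  replace L with ((L - M) + M)%C by ring. rewrite E. ring.
Qed.

Lemma is_lim_Cseq_csum (f : nat -> nat -> C) (g : nat -> C) K :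
  (forall k, (k < K)%nat -> is_lim_Cseq (fun N => f N k) (g k)) ->
  is_lim_Cseq (fun N => csum (f N) K) (csum g K).
Proof.
  induction K as [|K IH]; intros H; simpl; [apply is_lim_Cseq_const|].
  apply is_lim_Cseq_plus; [apply IH; intros|]; apply H; lia.
Qed.

Lemma is_series_lim_Cseq (u : nat -> C) S : is_series u S -> is_lim_Cseq (csum u) S.
Proof.
  intros H. apply (is_lim_Cseq_incr_n _ _ 1), is_lim_seq_spec. intros eps.
  destruct (proj1 (filterlim_locally_ball_norm _ _) H eps) as [N HN].
  exists N. intros n Hn. specialize (HN n Hn).
  rewrite Nat.add_1_r, <- sum_n_csum, Rminus_0_r, Rabs_pos_eq by apply Cmod_ge_0.
  exact HN.
Qed.

Lemma is_lim_Cseq_fst u L : is_lim_Cseq u L -> is_lim_seq (fun n => fst (u n)) (fst L).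
Proof.
  intros H. apply is_lim_seq_le_le with (fun n => fst L - Cmod (u n - L))
      (fun n => fst L + Cmod (u n - L)).
  - intros n. assert (T := Rle_trans _ _ _ (Rmax_l _ _) (Rmax_Cmod (u n - L)%C)).
    simpl in T. apply Rabs_le_between in T. lra.
  - replace (Finite (fst L)) with (Finite (fst L - 0)) by (f_equal; ring).
    apply is_lim_seq_minus'; [apply is_lim_seq_const | apply H].
  - replace (Finite (fst L)) with (Finite (fst L + 0)) by (f_equal; ring).
    apply is_lim_seq_plus'; [apply is_lim_seq_const | apply H].
Qed.

Lemma is_lim_Cseq_snd u L : is_lim_Cseq u L -> is_lim_seq (fun n => snd (u n)) (snd L).
Proof.
  intros H. apply is_lim_seq_le_le with (fun n => snd L - Cmod (u n - L))
      (fun n => snd L + Cmod (u n - L)).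
  - intros n. assert (T := Rle_trans _ _ _ (Rmax_r _ _) (Rmax_Cmod (u n - L)%C)).
    simpl in T. apply Rabs_le_between in T. lra.
  - replace (Finite (snd L)) with (Finite (snd L - 0)) by (f_equal; ring).
    apply is_lim_seq_minus'; [apply is_lim_seq_const | apply H].
  - replace (Finite (snd L)) with (Finite (snd L + 0)) by (f_equal; ring).
    apply is_lim_seq_plus'; [apply is_lim_seq_const | apply H].
Qed.

End ComplexLimits.

Lemma qpoch_inf_is_lim x p P : is_lim_Cseq (qpoch x p) P -> qpoch_inf x p = P.
Proof.
  intros H. unfold qpoch_inf.
  rewrite (is_lim_seq_unique _ _ (is_lim_Cseq_fst _ _ H)),
    (is_lim_seq_unique _ _ (is_lim_Cseq_snd _ _ H)).
  destruct P; reflexivity.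
Qed.

Lemma is_lim_Cseq_qpoch_1 (y : nat -> C) p r :
  is_lim_Cseq y 0 -> is_lim_Cseq (fun N => qpoch (y N) p r) 1.
Proof.
  intros Hy. induction r as [|r IH]; simpl; [apply is_lim_Cseq_const|].
  assert (H : is_lim_Cseq (fun N => qpoch (y N) p r * (1 - y N * p ^ r))
                          (1 * (1 + -1 * (0 * p ^ r)))).
  { apply is_lim_Cseq_mult; auto. apply is_lim_Cseq_plus; [apply is_lim_Cseq_const|].
    apply (is_lim_Cseq_ext (fun n => -1 * (y n * p ^ r))); [intros; ring|].
    apply is_lim_Cseq_mult; [apply is_lim_Cseq_const|].
    apply is_lim_Cseq_mult; auto using is_lim_Cseq_const. }
  replace (1 * (1 + -1 * (0 * p ^ r))) with (RtoC 1) in H by ring. exact H.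
Qed.

Section QPochhammerEstimates.
Local Open Scope R_scope.

Fixpoint rsum (f : nat -> R) (n : nat) : R :=
  match n with O => 0 | S m => rsum f m + f m end.

Lemma rsum_le f g n : (forall k, (k < n)%nat -> f k <= g k) -> rsum f n <= rsum g n.
Proof.
  induction n as [|n IH]; intros H; simpl; [lra|].
  assert (f n <= g n) by (apply H; lia).
  assert (rsum f n <= rsum g n) by (apply IH; intros; apply H; lia). lra.
Qed.

Lemma rsum_nonneg f n : (forall k, 0 <= f k) -> 0 <= rsum f n.
Proof. induction n; intros H; simpl; [lra|]. specialize (IHn H). specialize (H n). lra. Qed.

Lemma rsum_scal_l c f n : rsum (fun k => c * f k) n = c * rsum f n.
Proof. induction n; simpl; [ring | rewrite IHn; ring]. Qed.

Lemma rsum_split f m n : rsum f (m + n) = rsum f m + rsum (fun k => f (m + k)%nat) n.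
Proof.
  induction n; simpl; [rewrite Nat.add_0_r; ring|].
  rewrite Nat.add_succ_r. simpl. rewrite IHn. ring.
Qed.

Lemma sum_n_rsum (f : nat -> R) n : sum_n f n = rsum f (S n).
Proof. induction n; [rewrite sum_O; simpl; ring | rewrite sum_Sn, IHn; reflexivity]. Qed.

Lemma Cmod_csum_le f n : Cmod (csum f n) <= rsum (fun k => Cmod (f k)) n.
Proof.
  induction n; simpl; [rewrite Cmod_0; lra|].
  eapply Rle_trans; [apply Cmod_triangle | lra].
Qed.

Lemma rsum_geom_le t n : 0 <= t < 1 -> rsum (fun i => t ^ i) n <= / (1 - t).
Proof.
  intros Ht. assert (E : rsum (fun i => t ^ i) n = (1 - t ^ n) / (1 - t)).
  { induction n; simpl; [field; lra | rewrite IHn; field; lra]. }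
  rewrite E. unfold Rdiv. rewrite <- (Rmult_1_l (/ (1 - t))) at 2.
  apply Rmult_le_compat_r; [left; apply Rinv_0_lt_compat; lra|].
  assert (0 <= t ^ n) by (apply pow_le; lra). lra.
Qed.

Lemma rsum_le_series (M : nat -> R) SM n :
  (forall k, 0 <= M k) -> is_series M SM -> rsum M n <= SM.
Proof.
  intros Hp H.
  assert (Hl : is_lim_seq (fun m => rsum M (S m)) SM)
    by (eapply is_lim_seq_ext; [intros m; apply sum_n_rsum | exact H]).
  apply (is_lim_seq_le_loc (fun _ => rsum M n) (fun m => rsum M (S m)) (rsum M n) SM);
    auto using is_lim_seq_const.
  exists n. intros m Hm. replace (S m) with (n + (S m - n))%nat by lia.
  rewrite rsum_split.
  assert (0 <= rsum (fun k => M (n + k)%nat) (S m - n)) by (apply rsum_nonneg; auto).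
  lra.
Qed.

Lemma exp_le_compat x y : x <= y -> exp x <= exp y.
Proof. intros [H|H]; [left; apply exp_increasing; auto | right; subst; auto]. Qed.

Lemma pow_le_1 t n : 0 <= t <= 1 -> t ^ n <= 1.
Proof. intros Ht. rewrite <- (pow1 n). apply pow_incr. lra. Qed.

Lemma pow_decreasing t m n : 0 <= t <= 1 -> (m <= n)%nat -> t ^ n <= t ^ m.
Proof.
  intros Ht Hmn. replace n with (m + (n - m))%nat by lia. rewrite pow_add.
  rewrite <- (Rmult_1_r (t ^ m)) at 2. apply Rmult_le_compat_l; [apply pow_le; lra|].
  apply pow_le_1. lra.
Qed.

Lemma Cmod_1_minus_le (z : C) : Cmod (1 - z) <= 1 + Cmod z.
Proof. eapply Rle_trans; [apply Cmod_triangle|]. rewrite Cmod_opp, Cmod_1. lra. Qed.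

Lemma Cmod_1_minus_ge (z : C) : 1 - Cmod z <= Cmod (1 - z).
Proof. assert (T := Cmod_le_sub 1 z). rewrite Cmod_1 in T. lra. Qed.

(* [exp (- u) <= 1 / (1 + u)], and [1 / (1 + y / (1 - t)) <= 1 - y] as long as [y <= t]. *)
Lemma one_minus_ge_exp y t : 0 <= y <= t -> t < 1 -> exp (- (y / (1 - t))) <= 1 - y.
Proof.
  intros Hy Ht. rewrite exp_Ropp.
  assert (E := exp_ineq1_le (y / (1 - t))).
  assert (0 <= y / (1 - t)) by (apply Rdiv_le_0_compat; lra).
  apply Rle_trans with (/ (1 + y / (1 - t))); [apply Rinv_le_contravar; lra|].
  rewrite <- (Rinv_inv (1 - y)) by lra.
  apply Rinv_le_contravar; [apply Rinv_0_lt_compat; lra|].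
  apply Rmult_le_reg_r with (1 - y); [lra|]. rewrite Rinv_l by lra.
  assert (y * (t - y) / (1 - t) >= 0) by (apply Rle_ge, Rdiv_le_0_compat; nra).
  replace ((1 + y / (1 - t)) * (1 - y)) with (1 + y * (t - y) / (1 - t)) by (field; lra). lra.
Qed.

Let Cmod_qpoch_le_rsum x p n :
  Cmod (qpoch x p n) <= exp (Cmod x * rsum (fun i => Cmod p ^ i) n).
Proof.
  induction n; simpl; [rewrite Cmod_1, Rmult_0_r, exp_0; lra|].
  rewrite Cmod_mult, Rmult_plus_distr_l, exp_plus.
  apply Rmult_le_compat; try apply Cmod_ge_0; auto.
  eapply Rle_trans; [apply Cmod_1_minus_le|]. rewrite Cmod_mult, Cmod_pow.
  apply exp_ineq1_le.
Qed.

Lemma Cmod_qpoch_le x p n : Cmod p < 1 -> Cmod (qpoch x p n) <= exp (Cmod x / (1 - Cmod p)).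
Proof.
  intros Hp. eapply Rle_trans; [apply Cmod_qpoch_le_rsum|]. apply exp_le_compat.
  apply Rmult_le_compat_l; [apply Cmod_ge_0|]. apply rsum_geom_le.
  split; auto. apply Cmod_ge_0.
Qed.

Let Cmod_qpoch_ge_rsum x p n t : Cmod x <= t -> t < 1 -> Cmod p <= 1 ->
  exp (- (Cmod x * rsum (fun i => Cmod p ^ i) n / (1 - t))) <= Cmod (qpoch x p n).
Proof.
  intros Hx Ht Hp. induction n; simpl.
  - rewrite Cmod_1, Rmult_0_r. unfold Rdiv. rewrite Rmult_0_l, Ropp_0, exp_0. lra.
  - rewrite Cmod_mult.
    replace (- (Cmod x * (rsum (fun i => Cmod p ^ i) n + Cmod p ^ n) / (1 - t)))
      with (- (Cmod x * rsum (fun i => Cmod p ^ i) n / (1 - t)) + - (Cmod x * Cmod p ^ n / (1 - t)))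
      by (field; lra).
    rewrite exp_plus. apply Rmult_le_compat; try (left; apply exp_pos); auto.
    eapply Rle_trans; [|apply Cmod_1_minus_ge]. rewrite Cmod_mult, Cmod_pow.
    assert (0 <= Cmod p ^ n <= 1)
      by (split; [apply pow_le, Cmod_ge_0 | apply pow_le_1; split; auto; apply Cmod_ge_0]).
    assert (0 <= Cmod x) by apply Cmod_ge_0.
    apply one_minus_ge_exp; auto. split; nra.
Qed.

Lemma Cmod_qpoch_ge x p n t : Cmod x <= t -> t < 1 -> Cmod p < 1 ->
  exp (- (Cmod x / (1 - Cmod p) / (1 - t))) <= Cmod (qpoch x p n).
Proof.
  intros Hx Ht Hp. eapply Rle_trans; [|apply Cmod_qpoch_ge_rsum with (t := t); auto; lra].
  apply exp_le_compat, Ropp_le_contravar. unfold Rdiv.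
  apply Rmult_le_compat_r; [left; apply Rinv_0_lt_compat; lra|].
  apply Rmult_le_compat_l; [apply Cmod_ge_0|]. apply rsum_geom_le. split; auto. apply Cmod_ge_0.
Qed.

Lemma ex_lim_Cseq_qpoch x p : Cmod p < 1 -> exists L, is_lim_Cseq (qpoch x p) L.
Proof.
  intros Hp.
  set (d j := (qpoch x p (S j) - qpoch x p j)%C).
  set (E := exp (Cmod x / (1 - Cmod p))).
  assert (Hd : ex_series d).
  { apply (@ex_series_le C_AbsRing C_CompleteNormedModule d (fun j => E * Cmod x * Cmod p ^ j)).
    - intros j. change (Cmod (d j) <= E * Cmod x * Cmod p ^ j). unfold d.
      rewrite qpoch_S.
      replace (qpoch x p j * (1 - x * p ^ j) - qpoch x p j)%C with
        (- (qpoch x p j * (x * p ^ j)))%C by ring.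
      rewrite Cmod_opp, !Cmod_mult, Cmod_pow, Rmult_assoc.
      apply Rmult_le_compat_r; [apply Rmult_le_pos; [apply Cmod_ge_0 | apply pow_le, Cmod_ge_0]|].
      apply Cmod_qpoch_le; auto.
    - apply (@ex_series_scal_l R_AbsRing R_NormedModule (E * Cmod x)).
      apply ex_series_geom. rewrite Rabs_pos_eq; auto. apply Cmod_ge_0. }
  destruct Hd as [L HL]. exists (1 + L)%C.
  apply (is_lim_Cseq_ext (fun n => 1 + csum d n)%C).
  - intros n. induction n as [|n IH]; [change (1 + 0 = 1)%C; ring|].
    rewrite csum_S, Cplus_assoc, IH. unfold d. ring.
  - apply is_lim_Cseq_plus; [apply is_lim_Cseq_const | apply is_series_lim_Cseq; auto].
Qed.

Lemma pos_bounded_below_of_tail (x : nat -> R) K d : (forall n, 0 < x n) -> 0 < d ->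
  (forall n, (K <= n)%nat -> d <= x n) -> exists d', 0 < d' /\ forall n, d' <= x n.
Proof.
  revert d. induction K as [|K IH]; intros d Hx Hd H.
  - exists d. split; auto. intros n. apply H. lia.
  - apply (IH (Rmin d (x K))); auto using Rmin_pos.
    intros n Hn. destruct (Nat.eq_dec n K) as [->|]; [apply Rmin_r|].
    eapply Rle_trans; [apply Rmin_l | apply H; lia].
Qed.

(* Factors [1 - x p ^ k] stay away from [0] beyond the index where [|x p ^ k| <= |p|]. *)
Lemma Cmod_qpoch_bounded_below x p : 0 < Cmod p < 1 -> (forall k, qpoch x p k <> 0%C) ->
  exists d, 0 < d /\ forall n, d <= Cmod (qpoch x p n).
Proof.
  intros Hp Hx.
  assert (HK : exists K, Cmod x * Cmod p ^ K <= Cmod p).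
  { destruct (Req_dec (Cmod x) 0) as [E|E]; [exists O; rewrite E; lra|].
    assert (0 < Cmod x) by (assert (T := Cmod_ge_0 x); lra).
    destruct (pow_lt_1_zero (Cmod p) ltac:(rewrite Rabs_pos_eq; lra) (Cmod p / Cmod x)
      ltac:(apply Rdiv_lt_0_compat; lra)) as [K HK].
    exists K. specialize (HK K (le_n K)). rewrite Rabs_pos_eq in HK by (apply pow_le; lra).
    apply Rmult_lt_compat_l with (r := Cmod x) in HK; auto.
    replace (Cmod x * (Cmod p / Cmod x)) with (Cmod p) in HK by (field; lra). lra. }
  destruct HK as [K HK].
  set (l := exp (- (Cmod p / (1 - Cmod p) / (1 - Cmod p)))).
  assert (Htail : forall n, (K <= n)%nat -> Cmod (qpoch x p K) * l <= Cmod (qpoch x p n)).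
  { intros n Hn. replace n with (K + (n - K))%nat by lia. rewrite qpoch_add, Cmod_mult.
    apply Rmult_le_compat_l; [apply Cmod_ge_0|].
    eapply Rle_trans; [|apply (Cmod_qpoch_ge (x * p ^ K) p (n - K) (Cmod p)); try lra;
                          rewrite Cmod_mult, Cmod_pow; auto].
    apply exp_le_compat, Ropp_le_contravar. unfold Rdiv.
    assert (0 < / (1 - Cmod p)) by (apply Rinv_0_lt_compat; lra).
    apply Rmult_le_compat_r; [lra|]. apply Rmult_le_compat_r; [lra|].
    rewrite Cmod_mult, Cmod_pow. auto. }
  apply (pos_bounded_below_of_tail (fun n => Cmod (qpoch x p n)) K (Cmod (qpoch x p K) * l));
    auto.
  - intros n. apply Cmod_gt_0, Hx.
  - apply Rmult_lt_0_compat; [apply Cmod_gt_0, Hx | apply exp_pos].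
Qed.

End QPochhammerEstimates.

(** * Tannery's theorem *)

Section Tannery.
Local Open Scope R_scope.

Lemma rsum_tail_le (M : nat -> R) SM K m :
  (forall k, 0 <= M k) -> is_series M SM -> rsum (fun k => M (K + k)%nat) m <= SM - rsum M K.
Proof.
  intros Hp H. assert (T := rsum_le_series M SM (K + m) Hp H). rewrite rsum_split in T. lra.
Qed.

Lemma Cmod_series_tail_le (g : nat -> C) (M : nat -> R) G SM K :
  (forall k, Cmod (g k) <= M k) -> is_series g G -> is_series M SM ->
  Cmod (G - csum g K) <= SM - rsum M K.
Proof.
  intros HgM Hg HM.
  assert (Mpos : forall k, 0 <= M k) by (intros k; eapply Rle_trans; [apply Cmod_ge_0 | apply HgM]).
  apply (is_lim_Cseq_Cmod_le (fun n => csum g n - csum g K)%C).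
  - apply is_lim_Cseq_plus; [apply is_series_lim_Cseq; auto|].
    apply (is_lim_Cseq_ext (fun _ => -1 * csum g K)%C); [intros; ring|].
    replace (- csum g K)%C with (-1 * csum g K)%C by ring. apply is_lim_Cseq_const.
  - exists K. intros n Hn. replace n with (K + (n - K))%nat by lia.
    rewrite csum_split. replace (csum g K + csum (fun k => g (K + k)%nat) (n - K) - csum g K)%C
      with (csum (fun k => g (K + k)%nat) (n - K)) by ring.
    eapply Rle_trans; [apply Cmod_csum_le|].
    eapply Rle_trans; [|apply (rsum_tail_le M SM K (n - K)); auto].
    apply rsum_le. intros; apply HgM.
Qed.

Theorem tannery (f : nat -> nat -> C) (g : nat -> C) (M : nat -> R) SM G :
  (forall k, is_lim_Cseq (fun N => f N k) (g k)) ->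
  (forall N k, (k <= N)%nat -> Cmod (f N k) <= M k) ->
  is_series M SM -> is_series g G ->
  is_lim_Cseq (fun N => csum (f N) (S N)) G.
Proof.
  intros Hf HM HS HG.
  assert (Mpos : forall k, 0 <= M k)
    by (intros k; eapply Rle_trans; [apply Cmod_ge_0 | apply (HM k k); lia]).
  assert (HgM : forall k, Cmod (g k) <= M k).
  { intros k. apply (is_lim_Cseq_Cmod_le _ _ _ (Hf k)). exists k. intros N HN. apply HM; lia. }
  assert (Tlim : is_lim_seq (fun K => SM - rsum M K) 0).
  { replace (Finite 0) with (Finite (SM - SM)) by (f_equal; ring).
    apply is_lim_seq_minus'; [apply is_lim_seq_const|].
    apply (is_lim_seq_incr_n _ 1). eapply is_lim_seq_ext; [|exact HS].
    intros m. rewrite sum_n_rsum. f_equal. lia. }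
  apply is_lim_seq_spec. intros eps.
  apply is_lim_seq_spec in Tlim.
  destruct (Tlim (mkposreal (eps / 4) ltac:(destruct eps; simpl; lra))) as [K HK].
  specialize (HK K (le_n K)). simpl in HK.
  assert (TK0 : 0 <= SM - rsum M K) by (assert (T := rsum_le_series M SM K Mpos HS); lra).
  rewrite Rminus_0_r, Rabs_pos_eq in HK by auto.
  assert (X := is_lim_Cseq_csum f g K (fun k _ => Hf k)). apply is_lim_seq_spec in X.
  destruct (X (mkposreal (eps / 4) ltac:(destruct eps; simpl; lra))) as [N1 HN1].
  exists (Nat.max N1 K). intros N HN.
  specialize (HN1 N ltac:(lia)). simpl in HN1.
  rewrite Rminus_0_r, Rabs_pos_eq in HN1 by apply Cmod_ge_0.
  rewrite Rminus_0_r, Rabs_pos_eq by apply Cmod_ge_0.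
  replace (S N) with (K + (S N - K))%nat by lia. rewrite csum_split.
  set (m := (S N - K)%nat).
  replace (csum (f N) K + csum (fun k => f N (K + k)%nat) m - G)%C with
    ((csum (f N) K - csum g K) + csum (fun k => f N (K + k)%nat) m + - (G - csum g K))%C by ring.
  assert (Hmid : Cmod (csum (fun k => f N (K + k)%nat) m) <= SM - rsum M K).
  { eapply Rle_trans; [apply Cmod_csum_le|].
    eapply Rle_trans; [|apply (rsum_tail_le M SM K m); auto].
    apply rsum_le. intros k Hk. apply HM. unfold m in Hk. lia. }
  assert (Htail := Cmod_series_tail_le g M G SM K HgM HG HS).
  eapply Rle_lt_trans; [apply Cmod_triangle|]. rewrite Cmod_opp.
  eapply Rle_lt_trans; [apply Rplus_le_compat_r, Cmod_triangle|].
  destruct eps as [e He]. simpl in *. lra.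
Qed.

End Tannery.

Section Limits.
Local Open Scope R_scope.

Lemma qpoch_neq0_Cmod x p n : Cmod x < 1 -> Cmod p <= 1 -> qpoch x p n <> 0%C.
Proof.
  intros Hx Hp. apply qpoch_neq0. intros k _ E.
  assert (T : Cmod (x * p ^ k) < 1).
  { rewrite Cmod_mult, Cmod_pow.
    assert (0 <= Cmod p ^ k) by apply pow_le, Cmod_ge_0.
    assert (Cmod p ^ k <= 1) by (apply pow_le_1; split; auto using Cmod_ge_0).
    assert (T := Cmod_ge_0 x). nra. }
  rewrite E, Cmod_1 in T. lra.
Qed.

Lemma qpoch_lim_neq0 x p P : 0 < Cmod p < 1 -> (forall k, qpoch x p k <> 0%C) ->
  is_lim_Cseq (qpoch x p) P -> P <> 0%C.
Proof.
  intros Hp Hx HP E. destruct (Cmod_qpoch_bounded_below x p Hp Hx) as [d [Hd Hd']].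
  assert (T := is_lim_Cseq_Cmod_ge _ _ d HP (ex_intro _ O (fun n _ => Hd' n))).
  rewrite E, Cmod_0 in T. lra.
Qed.

Lemma is_lim_Cseq_mul_pow_sub x p r : Cmod p < 1 -> is_lim_Cseq (fun N => x * p ^ (N - r))%C 0.
Proof.
  intros Hp. apply is_lim_Cseq_bound with (fun N => Cmod x * Cmod p ^ (N - r)).
  - intros N. replace (x * p ^ (N - r) - 0)%C with (x * p ^ (N - r))%C by ring.
    rewrite Cmod_mult, Cmod_pow. lra.
  - replace (Finite 0) with (Finite (Cmod x * 0)) by (f_equal; ring).
    apply is_lim_seq_mult'; [apply is_lim_seq_const|].
    apply (is_lim_seq_incr_n _ r). eapply is_lim_seq_ext; [|apply is_lim_seq_geom].
    + intros n. cbv beta. f_equal. lia.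
    + rewrite Rabs_pos_eq; auto using Cmod_ge_0.
Qed.

Lemma Rdiv_le_mono x X y Y : 0 <= x <= X -> 0 < Y <= y -> x / y <= X / Y.
Proof.
  intros Hx Hy. unfold Rdiv. apply Rmult_le_compat; try lra.
  - left; apply Rinv_0_lt_compat; lra.
  - apply Rinv_le_contravar; lra.
Qed.

Lemma is_series_geom_scal K t : 0 <= t < 1 -> is_series (fun n => K * t ^ n) (K / (1 - t)).
Proof.
  intros Ht. apply (@is_series_scal_l R_AbsRing R_NormedModule K (fun n => t ^ n)).
  apply is_series_geom. rewrite Rabs_pos_eq; lra.
Qed.

Lemma ex_series_geom_bound (u : nat -> C) K t :
  0 <= t < 1 -> (forall n, Cmod (u n) <= K * t ^ n) -> ex_series u.
Proof.
  intros Ht Hu. apply (@ex_series_le C_AbsRing C_CompleteNormedModule _ (fun n => K * t ^ n)).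
  - exact Hu.
  - eexists. apply is_series_geom_scal; auto.
Qed.

End Limits.

Lemma tannery_bounded_weights (u : nat -> C) (w : nat -> nat -> C) U om K t B :
  0 <= t < 1 -> (forall k, Cmod (u k) <= K * t ^ k)%R -> (forall N k, Cmod (w N k) <= B)%R ->
  (forall k, is_lim_Cseq (fun N => w N k) om) -> is_series u U ->
  is_lim_Cseq (fun N => csum (fun k => u k * w N k) (S N)) (U * om).
Proof.
  intros Ht Hu Hw Hlim HU.
  apply (tannery _ (fun k => u k * om) (fun k => B * K * t ^ k)%R (B * K / (1 - t))%R).
  - intros k. apply is_lim_Cseq_mult; auto using is_lim_Cseq_const.
  - intros N k _. rewrite Cmod_mult.
    replace (B * K * t ^ k)%R with (K * t ^ k * B)%R by ring.
    apply Rmult_le_compat; auto using Cmod_ge_0.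
  - apply is_series_geom_scal. auto.
  - replace (U * om)%C with (om * U)%C by ring.
    eapply is_series_ext; [|apply (@is_series_scal_l C_AbsRing C_NormedModule om _ _ HU)].
    intros n. change (om * u n = u n * om)%C. ring.
Qed.

Section BaileyLimit.
Local Open Scope R_scope.
Variables q a c : C.
Hypothesis Hq0 : 0 < Cmod q.
Hypothesis Hq1 : Cmod q < 1.
Hypothesis Ha : a <> 0%C.
Hypothesis Hc : c <> 0%C.
Hypothesis HQa : forall k, qpoch (q ^ 2 * a) (q ^ 2) k <> 0%C.
Hypothesis HQc : forall k, qpoch (q ^ 2 * c) (q ^ 2) k <> 0%C.
Hypothesis Hac : Cmod (a * c) < Cmod q ^ 2.

Local Notation Q := (q ^ 2)%C.

Let Hq : q <> 0%C.
Proof. apply Cmod_gt_0. auto. Qed.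

Let CmodQ : 0 < Cmod Q < 1.
Proof. rewrite Cmod_pow. split; [apply pow_lt; auto | simpl; nra]. Qed.

Let HQ k : qpoch Q Q k <> 0%C.
Proof. apply qpoch_neq0_Cmod; lra. Qed.

Let Hqq k : qpoch q Q k <> 0%C.
Proof. apply qpoch_neq0_Cmod; lra. Qed.

Let Hmq k : qpoch (- q) q k <> 0%C.
Proof. apply qpoch_neq0_Cmod; rewrite ?Cmod_opp; lra. Qed.

Let rho := Cmod (a * c) / Cmod Q.

Let rho_range : 0 <= rho < 1.
Proof.
  unfold rho. rewrite Cmod_pow in *. split.
  - apply Rdiv_le_0_compat; [apply Cmod_ge_0 | lra].
  - apply Rmult_lt_reg_r with (Cmod q ^ 2); [lra|].
    unfold Rdiv. rewrite Rmult_assoc, Rinv_l by lra. lra.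
Qed.

Lemma Cmod_theta_coef_le s : Cmod (theta_coef q s) <= 2 * Cmod q ^ s.
Proof.
  destruct s; cbn [theta_coef]; [rewrite Cmod_1; simpl; lra|].
  rewrite !Cmod_mult, !Cmod_pow, !Cmod_R, Rabs_m1, pow1, Rabs_pos_eq by lra.
  assert (Cmod q ^ (S s * S s) <= Cmod q ^ S s)
    by (apply pow_decreasing; [split; [apply Cmod_ge_0 | lra] | nia]).
  lra.
Qed.

Lemma Cmod_bailey_alpha_le r : Cmod (bailey_alpha q r) <= 4 / (1 - Cmod q) / Cmod Q ^ r.
Proof.
  unfold bailey_alpha, alpha_factor.
  assert (HQr : 0 < Cmod Q ^ r) by (apply pow_lt; lra).
  rewrite Cmod_mult, Cmod_div, (Cmod_pow Q r) by (apply Cpow_nz, Cpow_nz; auto).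
  assert (H1 : Cmod (1 - Q ^ S (2 * r)) <= 2).
  { eapply Rle_trans; [apply Cmod_1_minus_le|]. rewrite Cmod_pow.
    assert (Cmod Q ^ S (2 * r) <= 1) by (apply pow_le_1; lra). lra. }
  assert (H2 : Cmod (csum (theta_coef q) (S r)) <= 2 / (1 - Cmod q)).
  { eapply Rle_trans; [apply Cmod_csum_le|].
    eapply Rle_trans;
      [apply (rsum_le _ (fun s => 2 * Cmod q ^ s)); intros; apply Cmod_theta_coef_le|].
    rewrite rsum_scal_l. apply Rmult_le_compat_l; [lra|].
    apply rsum_geom_le. split; [apply Cmod_ge_0 | lra]. }
  assert (0 <= Cmod (csum (theta_coef q) (S r))) by apply Cmod_ge_0.
  assert (0 <= Cmod (1 - Q ^ S (2 * r))) by apply Cmod_ge_0.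
  replace (4 / (1 - Cmod q) / Cmod Q ^ r) with (2 * (2 / (1 - Cmod q)) / Cmod Q ^ r)
    by (field; lra).
  set (X := Cmod (1 - Q ^ S (2 * r))) in *. set (Y := Cmod (csum (theta_coef q) (S r))) in *.
  unfold Rdiv. replace (X * / Cmod Q ^ r * Y) with (X * Y * / Cmod Q ^ r) by ring.
  apply Rmult_le_compat_r; [left; apply Rinv_0_lt_compat; auto|].
  apply Rmult_le_compat; auto.
Qed.

Lemma lhs_term_geom_bound : exists K, forall r, Cmod (lhs_term q a c r) <= K * rho ^ r.
Proof.
  destruct (Cmod_qpoch_bounded_below (Q * a) Q CmodQ HQa) as [da [Hda Hda']].
  destruct (Cmod_qpoch_bounded_below (Q * c) Q CmodQ HQc) as [dc [Hdc Hdc']].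
  set (Ea := exp (Cmod (Q / a) / (1 - Cmod Q))).
  set (Ec := exp (Cmod (Q / c) / (1 - Cmod Q))).
  exists (4 / (1 - Cmod q) * (Ea * Ec) / (da * dc)). intros r.
  rewrite (lhs_term_bailey_alpha q a c) by auto.
  unfold rho. set (z := (a * c)%C).
  rewrite Cmod_mult, Cmod_div by (apply Cmult_neq_0; auto).
  rewrite !Cmod_mult, Cmod_pow.
  assert (HQr : 0 < Cmod Q ^ r) by (apply pow_lt; lra).
  apply Rle_trans with (4 / (1 - Cmod q) / Cmod Q ^ r * (Ea * Ec * Cmod z ^ r / (da * dc))).
  - apply Rmult_le_compat; auto using Cmod_ge_0, Cmod_bailey_alpha_le.
    + apply Rdiv_le_0_compat; [|apply Rmult_lt_0_compat; apply Cmod_gt_0; auto].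
      repeat apply Rmult_le_pos; auto using Cmod_ge_0, pow_le.
    + apply Rdiv_le_mono.
      * split; [repeat apply Rmult_le_pos; auto using Cmod_ge_0, pow_le|].
        apply Rmult_le_compat_r; [apply pow_le, Cmod_ge_0|].
        apply Rmult_le_compat; auto using Cmod_ge_0, Cmod_qpoch_le; apply Cmod_qpoch_le; lra.
      * split; [apply Rmult_lt_0_compat; auto | apply Rmult_le_compat; lra || auto].
  - right. unfold Rdiv. rewrite Rpow_mult_distr, pow_inv. field. repeat split; lra.
Qed.

Lemma rhs_term_geom_bound : exists K, forall k, Cmod (rhs_term q a c k) <= K * rho ^ k.
Proof.
  destruct (Cmod_qpoch_bounded_below (- q) q ltac:(lra) Hmq) as [dq [Hdq Hdq']].
  destruct (Cmod_qpoch_bounded_below Q Q CmodQ HQ) as [dQ [HdQ HdQ']].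
  set (Ea := exp (Cmod (Q / a) / (1 - Cmod Q))).
  set (Ec := exp (Cmod (Q / c) / (1 - Cmod Q))).
  set (Eq := exp (Cmod q / (1 - Cmod Q))).
  exists (Ea * Ec * Eq / (dq * dQ)). intros k. unfold rhs_term.
  assert (HQ0 : Q <> 0%C) by (apply Cpow_nz; auto).
  rewrite Cmod_mult, Cmod_div by (apply Cmult_neq_0; auto).
  rewrite Cmod_pow, Cmod_div by auto. fold rho.
  apply Rmult_le_compat_r; [apply pow_le; lra|].
  rewrite !Cmod_mult. apply Rdiv_le_mono.
  - split; [repeat apply Rmult_le_pos; apply Cmod_ge_0|].
    repeat apply Rmult_le_compat; auto using Cmod_ge_0, Rmult_le_pos; apply Cmod_qpoch_le; lra.
  - split; [apply Rmult_lt_0_compat; auto | apply Rmult_le_compat; lra || auto].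
Qed.

Let lhs_weight N r : C :=
  (qpoch Q Q N * qpoch Q Q (S N) / (qpoch Q Q (N - r) * qpoch Q Q (S (N + r))))%C.

Let rhs_weight N k : C := (qpoch (a * c) Q (N - k) * qpoch Q Q N / qpoch Q Q (N - k))%C.

Let qpoch_QQ_split N r : (r <= N)%nat ->
  qpoch Q Q N = (qpoch Q Q (N - r) * qpoch (Q * Q ^ (N - r)) Q r)%C.
Proof. intros Hr. rewrite <- qpoch_add. f_equal. lia. Qed.

Let is_lim_Cseq_qpoch_tail r (f : nat -> nat) :
  (forall N, (N - r <= f N)%nat) -> is_lim_Cseq (fun N => qpoch (Q * Q ^ f N) Q r) 1.
Proof.
  intros Hf. apply is_lim_Cseq_qpoch_1, is_lim_Cseq_bound with (fun N => Cmod Q ^ (N - r)).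
  - intros N. replace (Q * Q ^ f N - 0)%C with (Q * Q ^ f N)%C by ring.
    rewrite Cmod_mult, (Cmod_pow Q (f N)).
    assert (Cmod Q ^ f N <= Cmod Q ^ (N - r)) by (apply pow_decreasing; auto; lra).
    assert (0 <= Cmod Q ^ f N) by (apply pow_le; lra). nra.
  - assert (H := is_lim_Cseq_mul_pow_sub 1 Q r ltac:(lra)). unfold is_lim_Cseq in H.
    eapply is_lim_seq_ext; [|exact H]. intros N. cbv beta.
    replace (1 * Q ^ (N - r) - 0)%C with (Q ^ (N - r))%C by ring. apply (Cmod_pow Q).
Qed.

Let Cmod_qpoch_QQ_range : exists d E, 0 < d /\ forall n, d <= Cmod (qpoch Q Q n) <= E.
Proof.
  destruct (Cmod_qpoch_bounded_below Q Q CmodQ HQ) as [d [Hd Hd']].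
  exists d, (exp (Cmod Q / (1 - Cmod Q))). split; auto.
  intros n. split; auto. apply Cmod_qpoch_le. lra.
Qed.

Lemma lhs_weight_bound : exists B, forall N r, Cmod (lhs_weight N r) <= B.
Proof.
  destruct Cmod_qpoch_QQ_range as [d [E [Hd HdE]]].
  exists (E * E / (d * d)). intros N r. unfold lhs_weight.
  rewrite Cmod_div by (apply Cmult_neq_0; auto). rewrite !Cmod_mult.
  apply Rdiv_le_mono.
  - split; [apply Rmult_le_pos; apply Cmod_ge_0|].
    apply Rmult_le_compat; auto using Cmod_ge_0; apply HdE.
  - split; [nra|]. apply Rmult_le_compat; lra || apply HdE.
Qed.

Lemma lhs_weight_lim r : is_lim_Cseq (fun N => lhs_weight N r) 1%C.
Proof.
  apply (is_lim_Cseq_ext_loc (fun N => qpoch (Q * Q ^ (N - r)) Q r / qpoch (Q * Q ^ S N) Q r)%C).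
  { exists r. intros N HN. unfold lhs_weight.
    replace (S (N + r)) with (S N + r)%nat by lia.
    rewrite (qpoch_QQ_split N r HN), (qpoch_add Q Q (S N) r).
    assert (H := HQ (S N + r)). rewrite qpoch_add in H. apply Cmult_neq_0_inv in H.
    assert (H' := HQ (N - r)). field. tauto. }
  replace (RtoC 1) with (1 * / 1)%C by field.
  apply is_lim_Cseq_mult; [apply is_lim_Cseq_qpoch_tail; auto|].
  apply is_lim_Cseq_inv; [apply is_lim_Cseq_qpoch_tail; intros; lia | intro E; injection E; lra].
Qed.

Lemma rhs_weight_bound : exists B, forall N k, Cmod (rhs_weight N k) <= B.
Proof.
  destruct Cmod_qpoch_QQ_range as [d [E [Hd HdE]]].
  set (Eac := exp (Cmod (a * c) / (1 - Cmod Q))).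
  exists (Eac * E / d). intros N k. unfold rhs_weight.
  rewrite Cmod_div by auto. rewrite Cmod_mult.
  apply Rdiv_le_mono.
  - split; [apply Rmult_le_pos; apply Cmod_ge_0|].
    apply Rmult_le_compat; auto using Cmod_ge_0; [apply Cmod_qpoch_le; lra | apply HdE].
  - split; [lra | apply HdE].
Qed.

Lemma rhs_weight_lim k Pac :
  is_lim_Cseq (qpoch (a * c) Q) Pac -> is_lim_Cseq (fun N => rhs_weight N k) Pac.
Proof.
  intros HP.
  apply (is_lim_Cseq_ext_loc (fun N => qpoch (a * c) Q (N - k) * qpoch (Q * Q ^ (N - k)) Q k)%C).
  { exists k. intros N HN. unfold rhs_weight. rewrite (qpoch_QQ_split N k HN).
    assert (H := HQ (N - k)). field. auto. }
  replace Pac with (Pac * 1)%C by ring.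
  apply is_lim_Cseq_mult; [|apply is_lim_Cseq_qpoch_tail; auto].
  apply (is_lim_Cseq_incr_n _ _ k). apply (is_lim_Cseq_ext (qpoch (a * c) Q)); [|exact HP].
  intros n. f_equal. lia.
Qed.

Theorem bailey_series_identity :
  exists s, is_series (rhs_term q a c) s /\ is_series (lhs_term q a c) (rhs_prefactor q a c * s)%C.
Proof.
  destruct lhs_term_geom_bound as [KL HKL], rhs_term_geom_bound as [KR HKR].
  destruct (ex_series_geom_bound _ _ _ rho_range HKL) as [L HL].
  destruct (ex_series_geom_bound _ _ _ rho_range HKR) as [s HS].
  exists s. split; [exact HS|].
  destruct (ex_lim_Cseq_qpoch Q Q ltac:(lra)) as [PQ HPQ],
    (ex_lim_Cseq_qpoch (Q * a) Q ltac:(lra)) as [Pa HPa],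
    (ex_lim_Cseq_qpoch (Q * c) Q ltac:(lra)) as [Pc HPc],
    (ex_lim_Cseq_qpoch (a * c) Q ltac:(lra)) as [Pac HPac].
  assert (Pa0 := qpoch_lim_neq0 _ _ _ CmodQ HQa HPa).
  assert (Pc0 := qpoch_lim_neq0 _ _ _ CmodQ HQc HPc).
  destruct lhs_weight_bound as [BL HBL], rhs_weight_bound as [BR HBR].
  assert (TL := tannery_bounded_weights _ _ _ _ _ _ _ rho_range HKL HBL lhs_weight_lim HL).
  assert (TR := tannery_bounded_weights _ _ _ _ _ _ _ rho_range HKR HBR
                  (fun k => rhs_weight_lim k Pac HPac) HS).
  assert (Hpre : is_lim_Cseq (fun N => qpoch Q Q (S N) / (qpoch (Q * a) Q N * qpoch (Q * c) Q N))%C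
                   (PQ / (Pa * Pc))%C).
  { apply is_lim_Cseq_mult; [apply (is_lim_Cseq_incr_n _ _ 1) in HPQ|].
    - apply (is_lim_Cseq_ext _ _ _ (fun n => f_equal _ (Nat.add_1_r n)) HPQ).
    - apply is_lim_Cseq_inv; [apply is_lim_Cseq_mult; auto | apply Cmult_neq_0; auto]. }
  assert (E : (L * 1)%C = (PQ / (Pa * Pc) * (s * Pac))%C).
  { apply (is_lim_Cseq_unique _ _ _ TL).
    apply (is_lim_Cseq_ext _ _ _
      (fun N => eq_sym (finite_bailey_identity q a c Hq Ha Hc HQ HQa HQc Hqq Hmq N))).
    apply is_lim_Cseq_mult; auto. }
  unfold rhs_prefactor.
  rewrite (qpoch_inf_is_lim _ _ _ HPQ), (qpoch_inf_is_lim _ _ _ HPa),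
    (qpoch_inf_is_lim _ _ _ HPc), (qpoch_inf_is_lim _ _ _ HPac).
  replace (PQ * Pac / (Pa * Pc) * s)%C with (L : C); [exact HL|].
  rewrite <- (Cmult_1_r L), E. field. auto.
Qed.

End BaileyLimit.

Lemma qpoch_sqr_mul_neq0 (q x : C) k :
  (forall j : nat, q ^ (2 * S j) * x <> 1) -> qpoch (q ^ 2 * x) (q ^ 2) k <> 0.
Proof.
  intros H. apply qpoch_neq0. intros j _.
  replace (q ^ 2 * x * (q ^ 2) ^ j) with (q ^ (2 * S j) * x) by (rewrite Cpow_mult_r, Cpow_S; ring).
  auto.
Qed.

Theorem theorem8p5 (q a c : C) :
  (0 < Cmod q)%R -> (Cmod q < 1)%R ->
  a <> 0 -> c <> 0 ->
  (forall k : nat, q ^ (2 * S k) * a <> 1) ->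
  (forall k : nat, q ^ (2 * S k) * c <> 1) ->
  (Cmod (a * c) < Cmod q ^ 2)%R ->
  exists S : C,
    is_series (rhs_term q a c) S /\
    is_series (lhs_term q a c) (rhs_prefactor q a c * S).
Proof.
  intros Hq0 Hq1 Ha Hc Ha1 Hc1 Hac.
  apply bailey_series_identity; auto; intros k; apply qpoch_sqr_mul_neq0; auto.
Qed.
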